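(* Let $x\in\mathbb{R}^n$, $d_{\max}>0$, $\alpha>0$ and $\Lambda>0$. Let $\mathcal{D}=\{d_1,\ldots,d_p\}\subset\mathbb{R}^n$ be a $\Lambda$-positive spanning set for $B(x,\alpha)$ such that $\|d_i\|\le d_{\max}\alpha$ for all $i=1,\ldots,p$. Then $\operatorname{cm}(\mathcal{D})\ge \kappa$, where $\kappa:=\frac{1}{d_{\max}\Lambda}$.
   Context: $\|\cdot\|$ is the Euclidean norm and $B(y,r)=\{z\in\mathbb{R}^n:\|z-y\|\le r\}$. Given $x\in\mathbb{R}^n$, $\alpha>0$ and $\Lambda>0$, a set $\{d_1,\ldots,d_p\}\subset\mathbb{R}^n$ is a $\Lambda$-positive spanning set for $B(x,\alpha)$ if for every $v\in B(0,\alpha)$ there exists $c(v)\in\mathbb{R}^p$ with $c(v)\ge 0$ componentwise such that $v=\sum_{i=1}^p c_i(v)d_i$ and $\sum_{i=1}^p c_i(v)\le\Lambda$. The cosine measure of a finite set $\mathcal{D}\subset\mathbb{R}^n$ is $\operatorname{cm}(\mathcal{D}):=\min_{v\neq 0}\max_{d\in\mathcal{D},\, d\neq 0}\frac{d^Tv}{\|d\|\,\|v\|}$. *)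

From HB Require Import structures.
From mathcomp Require Import all_boot all_order all_algebra.
From mathcomp Require Import all_classical all_reals.
Set Implicit Arguments. Unset Strict Implicit. Unset Printing Implicit Defensive.
Import Order.TTheory GRing.Theory Num.Theory.
Local Open Scope ring_scope.
Local Open Scope classical_set_scope.

Definition dotp (R : realType) (n : nat) (u v : 'rV[R]_n) : R :=
  \sum_(i < n) u ord0 i * v ord0 i.

Definition enorm (R : realType) (n : nat) (v : 'rV[R]_n) : R :=
  Num.sqrt (dotp v v).

Definition Lambda_PSS (R : realType) (n p : nat) (d : 'I_p -> 'rV[R]_n)
    (x : 'rV[R]_n) (alpha Lambda : R) : Prop :=
  forall v : 'rV[R]_n, enorm v <= alpha ->
    exists c : 'I_p -> R,
      (forall i, 0 <= c i) /\ v = \sum_(i < p) c i *: d i /\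
      \sum_(i < p) c i <= Lambda.

Definition cosang (R : realType) (n : nat) (d v : 'rV[R]_n) : R :=
  dotp d v / (enorm d * enorm v).

(* cm(D) = min_{v<>0} max_{d in D, d<>0} d^T v / (|d| |v|); the min is
   attained, so it equals the infimum used here. *)
Definition cm (R : realType) (n p : nat) (d : 'I_p -> 'rV[R]_n) : R :=
  inf [set (\big[Num.max/-1]_(i < p | d i != 0) cosang (d i) v)
       | v in [set v : 'rV[R]_n | v != 0]].

(* Fix v <> 0 and let mu be the largest cosine between v and the nonzero d_i.
   Scaling v to length alpha and writing it as a nonnegative combination
   sum c_i d_i with sum c_i <= Lambda gives
     alpha |v| = <sum c_i d_i, v> <= sum c_i max(mu,0) |d_i| |v|
               <= Lambda max(mu,0) dmax alpha |v|,
   so max(mu,0) >= 1 / (dmax Lambda) > 0, i.e. mu >= 1 / (dmax Lambda). *)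
From HB Require Import structures.
From mathcomp Require Import all_boot all_order all_algebra.
From mathcomp Require Import all_classical all_reals.
From mathcomp Require Import ring.
Set Implicit Arguments. Unset Strict Implicit. Unset Printing Implicit Defensive.
Import Order.TTheory GRing.Theory Num.Theory.
Local Open Scope ring_scope.

Section EuclideanGeometry.
Variables (R : realType) (n : nat).
Implicit Types (u v : 'rV[R]_n) (a : R).

Lemma dotpZl a u v : dotp (a *: u) v = a * dotp u v.
Proof. by rewrite /dotp mulr_sumr; apply: eq_bigr => i _; rewrite mxE mulrA. Qed.

Lemma dotpZr a u v : dotp u (a *: v) = a * dotp u v.
Proof. by rewrite /dotp mulr_sumr; apply: eq_bigr => i _; rewrite mxE mulrCA. Qed.

Lemma dotp0l v : dotp 0 v = 0.
Proof. by rewrite /dotp big1 // => i _; rewrite mxE mul0r. Qed.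

Lemma dotp_suml p (F : 'I_p -> 'rV[R]_n) v :
  dotp (\sum_(i < p) F i) v = \sum_(i < p) dotp (F i) v.
Proof.
rewrite /dotp; under eq_bigr do rewrite summxE mulr_suml.
by rewrite exchange_big.
Qed.

Lemma dotp_ge0 v : 0 <= dotp v v.
Proof. by apply: sumr_ge0 => i _; rewrite -expr2 sqr_ge0. Qed.

Lemma dotp_eq0 v : (dotp v v == 0) = (v == 0).
Proof.
apply/idP/eqP => [/eqP v0 | ->]; last by rewrite dotp0l.
apply/matrixP => i j; rewrite ord1 mxE.
have sqr_ge0' k : predT k -> 0 <= v ord0 k * v ord0 k.
  by rewrite -expr2 sqr_ge0.
by move: (@psumr_eq0P _ _ predT _ sqr_ge0' v0 j isT) => /eqP; rewrite mulf_eq0 orbb => /eqP.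
Qed.

Lemma enorm_ge0 v : 0 <= enorm v.
Proof. exact: sqrtr_ge0. Qed.

Lemma enorm_gt0 v : v != 0 -> 0 < enorm v.
Proof. by rewrite /enorm sqrtr_gt0 lt_def dotp_ge0 dotp_eq0 andbT. Qed.

Lemma enorm_sqr v : enorm v ^+ 2 = dotp v v.
Proof. by rewrite /enorm sqr_sqrtr // dotp_ge0. Qed.

Lemma enormZ a v : enorm (a *: v) = `|a| * enorm v.
Proof.
by rewrite /enorm dotpZl dotpZr mulrA -expr2 sqrtrM ?sqr_ge0 // sqrtr_sqr.
Qed.

Lemma dotp_cosang u v : u != 0 -> v != 0 ->
  dotp u v = cosang u v * (enorm u * enorm v).
Proof.
by move=> u0 v0; rewrite /cosang divfK // mulf_neq0 // gt_eqF ?enorm_gt0.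
Qed.

End EuclideanGeometry.

Section MaxCosine.
Variables (R : realType) (n p : nat) (d : 'I_p -> 'rV[R]_n) (v : 'rV[R]_n).
Hypothesis v_neq0 : v != 0.

Definition max_cosang : R := \big[Num.max/-1]_(i < p | d i != 0) cosang (d i) v.

Lemma cosang_le_max i : d i != 0 -> cosang (d i) v <= max_cosang.
Proof. by move=> di0; rewrite /max_cosang (bigD1 i) //= le_max lexx. Qed.

Lemma dotp_le_max_cosang i :
  dotp (d i) v <= Num.max max_cosang 0 * (enorm (d i) * enorm v).
Proof.
have [->|di0] := eqVneq (d i) 0.
  by rewrite dotp0l mulr_ge0 ?mulr_ge0 ?enorm_ge0 // le_max lexx orbT.
rewrite dotp_cosang //; apply: ler_wpM2r.
  by rewrite ltW // mulr_gt0 ?enorm_gt0.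
by rewrite le_max cosang_le_max.
Qed.

Lemma dotp_conic_le_max_cosang (c : 'I_p -> R) (K : R) :
  (forall i, 0 <= c i) -> (forall i, enorm (d i) <= K) ->
  dotp (\sum_(i < p) c i *: d i) v <=
    (\sum_(i < p) c i) * (Num.max max_cosang 0 * (K * enorm v)).
Proof.
move=> c_ge0 dK; rewrite dotp_suml mulr_suml; apply: ler_sum => i _.
rewrite dotpZl; apply: ler_wpM2l => //.
apply: (le_trans (dotp_le_max_cosang i)).
apply: ler_wpM2l; first by rewrite le_max lexx orbT.
by apply: ler_wpM2r; [exact: enorm_ge0 | exact: dK].
Qed.

Lemma Lambda_PSS_max_cosang_ge (x : 'rV[R]_n) (dmax alpha Lambda : R) :
  0 < dmax -> 0 < alpha -> 0 < Lambda ->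
  Lambda_PSS d x alpha Lambda -> (forall i, enorm (d i) <= dmax * alpha) ->
  1 / (dmax * Lambda) <= max_cosang.
Proof.
move=> dmax_gt0 alpha_gt0 Lambda_gt0 hPSS hnorm.
set s := enorm v; have s_gt0 : 0 < s := enorm_gt0 v_neq0.
set mu := Num.max max_cosang 0.
have [c [c_ge0 [vE sum_c]]] : exists c : 'I_p -> R, (forall i, 0 <= c i) /\
    (alpha / s) *: v = \sum_(i < p) c i *: d i /\ \sum_(i < p) c i <= Lambda.
  apply: hPSS; rewrite enormZ ger0_norm ?divfK ?gt_eqF //.
  by rewrite divr_ge0 ?ltW.
have mu_ge0 : 0 <= mu by rewrite le_max lexx orbT.
have K_ge0 : 0 <= dmax * alpha * s by rewrite ltW ?mulr_gt0.
have alpha_le : alpha * s <= mu * (dmax * Lambda) * (alpha * s).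
  have -> : mu * (dmax * Lambda) * (alpha * s) = Lambda * (mu * (dmax * alpha * s)).
    by ring.
  have -> : alpha * s = dotp ((alpha / s) *: v) v.
    by rewrite dotpZl -enorm_sqr -/s; field; rewrite gt_eqF.
  rewrite vE; apply: (le_trans (dotp_conic_le_max_cosang c_ge0 hnorm)).
  by apply: ler_wpM2r; rewrite // mulr_ge0.
have one_le : 1 <= mu * (dmax * Lambda).
  by rewrite -(ler_pM2r (mulr_gt0 alpha_gt0 s_gt0)) mul1r.
have max_cosang_gt0 : 0 < max_cosang.
  by move: one_le; rewrite /mu; case: leP => // _; rewrite mul0r ler10.
rewrite ler_pdivrMr ?mulr_gt0 //.
by move: one_le; rewrite /mu (max_idPl (ltW max_cosang_gt0)).
Qed.

End MaxCosine.

Theorem lemma3p2 (R : realType) (n p : nat) (n_gt0 : (0 < n)%N)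
  (x : 'rV[R]_n) (dmax alpha Lambda : R)
  (hdmax : 0 < dmax) (halpha : 0 < alpha) (hLambda : 0 < Lambda)
  (d : 'I_p -> 'rV[R]_n)
  (hPSS : Lambda_PSS d x alpha Lambda)
  (hnorm : forall i : 'I_p, enorm (d i) <= dmax * alpha) :
  cm d >= 1 / (dmax * Lambda).
Proof.
apply: lb_le_inf => [|_ [v /= v_neq0 <-]].
  have one_neq0 : const_mx 1 != 0 :> 'rV[R]_n.
    by apply/eqP => /matrixP/(_ ord0 (Ordinal n_gt0))/eqP; rewrite !mxE oner_eq0.
  by exists (max_cosang d (const_mx 1)), (const_mx 1).
exact: (Lambda_PSS_max_cosang_ge v_neq0 hdmax halpha hLambda hPSS hnorm).
Qed.
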